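(* Let $K$ be a field, $Q$ the bipartite type $A$ quiver with vertices $y_0,x_1,\dots,x_n,y_n$ and arrows $\alpha_i\colon x_i\to y_{i-1}$, $\beta_i\colon x_i\to y_i$, $\mathbf{d}$ a dimension vector, and $\mathbf{r}$ a quiver rank array. A matrix $Z\in Y^{\mathbf{w}}_\circ$ satisfies $\operatorname{rank}Z_{i\times j}=\mathbf{b}(\mathbf{r})_{i,j}$ for all $1\le i,j\le 2n+1$ if and only if $Z=\zeta(V)$ for some $V\in\mathrm{rep}_Q(\mathbf{d})$ satisfying $\mathbf{r}$.
   Context: $\mathrm{rep}_Q(\mathbf{d})$: tuples $V=(V_a)$, $V_a\in\mathrm{Mat}_{\mathbf{d}(ha)\times\mathbf{d}(ta)}(K)$, with $\mathbf{GL}(\mathbf{d})$ acting by $g\cdot V=(g_{ha}V_ag_{ta}^{-1})$. Intervals are nonempty sets of consecutive vertices with the arrows between them. $M_Q(V)$ is the block matrix with block rows $y_0,\dots,y_n$ and block columns $x_n,\dots,x_1$, $V_{\alpha_i}$ in block $(y_{i-1},x_i)$, $V_{\beta_i}$ in block $(y_i,x_i)$, zeros elsewhere; $M_J(V)$ is its submatrix on the block rows of the $y$-vertices in $J$ and block columns of the $x$-vertices in $J$; $r_J(V)=\operatorname{rank}M_J(V)$. A quiver rank array is a function $\mathbf{r}$ on intervals such that some $V$ has $r_J(V)=\mathbf{r}_J$ for all $J$ (''$V$ satisfies $\mathbf{r}$''); $\mathcal{O}_\mathbf{r}$ is the set of such $V$. $d_x=\sum\mathbf{d}(x_i)$, $d_y=\sum\mathbf{d}(y_i)$,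 $d=d_x+d_y$; $Y^{\mathbf{w}}_\circ$ is the set of $d\times d$ matrices $\begin{pmatrix}*&\mathbf{1}_{d_y}\\ \mathbf{1}_{d_x}&0\end{pmatrix}$; $\zeta(V)=\begin{pmatrix}M_Q(V)&\mathbf{1}_{d_y}\\ \mathbf{1}_{d_x}&0\end{pmatrix}$. Row blocks have sizes $\mathbf{d}(y_0),\dots,\mathbf{d}(y_n),\mathbf{d}(x_n),\dots,\mathbf{d}(x_1)$, column blocks sizes $\mathbf{d}(x_n),\dots,\mathbf{d}(x_1),\mathbf{d}(y_0),\dots,\mathbf{d}(y_n)$, numbered $1..2n+1$; $Z_{i\times j}$ is the submatrix of block rows $1..i$ and block columns $1..j$. $\mathbf{b}(\mathbf{r})_{i,j}=\operatorname{rank}\zeta(V)_{i\times j}$ for any $V\in\mathcal{O}_\mathbf{r}$ (independent of the choice). *)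

From HB Require Import structures.
From mathcomp Require Import all_boot all_order all_algebra.
From Stdlib Require Import ClassicalEpsilon.
Set Implicit Arguments. Unset Strict Implicit. Unset Printing Implicit Defensive.
Import GRing.Theory.
Local Open Scope ring_scope.

(* A dimension vector is given by dy k = d(y_k) (k = 0..n) and
   dx k = d(x_k) (k = 1..n); values outside these ranges are never used.
   A representation: Valpha i = V_(alpha_(i+1)) and Vbeta i = V_(beta_(i+1))
   for i : 'I_n (0-based index). *)

Section QuiverDefs.
Variable K : fieldType.
Variable n : nat.
Variables dy dx : nat -> nat.

Record rep := Rep {
  Valpha : forall i : 'I_n, 'M[K]_(dy i, dx i.+1);
  Vbeta  : forall i : 'I_n, 'M[K]_(dy i.+1, dx i.+1)
}.

Definition rep0 : rep := Rep (fun i => 0) (fun i => 0).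

Definition sy : seq nat := map dy (iota 0 n.+1).
Definition sxr : seq nat := map dx (rev (iota 1 n)).
Definition dyt : nat := sumn sy.
Definition dxt : nat := sumn sxr.

End QuiverDefs.

(* index of the block (w.r.t. block sizes s) containing the flat index r *)
Definition bidx (s : seq nat) (r : nat) : nat :=
  count (fun i => sumn (take i.+1 s) <= r)%N (iota 0 (size s)).
Definition boff (s : seq nat) (r : nat) : nat := (r - sumn (take (bidx s r) s))%N.

(* entry of a matrix at nat indices (0 outside the matrix) *)
Definition mxe (K : fieldType) (m p : nat) (A : 'M[K]_(m, p)) (i j : nat) : K :=
  match (insub i : option 'I_m), (insub j : option 'I_p) with
  | Some i', Some j' => A i' j'
  | _, _ => 0
  end.

Section QuiverMatrices.
Variable K : fieldType.
Variable n : nat.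
Variables dy dx : nat -> nat.

(* M_Q(V): block rows y_0..y_n, block columns x_n..x_1; V_(alpha_i) in block
   (y_(i-1), x_i), V_(beta_i) in block (y_i, x_i), zero elsewhere. *)
Definition MQ (V : rep K n dy dx) : 'M[K]_(dyt n dy, dxt n dx) :=
  \matrix_(a, b)
    let p := bidx (sy n dy) a in
    let q := bidx (sxr n dx) b in
    let oa := boff (sy n dy) a in
    let ob := boff (sxr n dx) b in
    match (insub (n - q.+1)%N : option 'I_n) with   (* i with x_(i+1) = x_(n-q) *)
    | Some i =>
        if p == (i : nat) then mxe (Valpha V i) oa ob
        else if p == i.+1 then mxe (Vbeta V i) oa ob
        else 0
    | None => 0
    end.

(* Intervals: the vertices are linearly ordered y_0, x_1, y_1, ..., x_n, y_n,
   and we give y_k position 2k and x_k position 2k-1.  An interval is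
   [a0, b0] = the vertices with positions between a0 and b0, 0 <= a0 <= b0 <= 2n. *)
Definition inJ (a0 b0 pos : nat) : bool := (a0 <= pos <= b0)%N.

Definition rowsJ (a0 b0 : nat) : seq nat :=
  [seq r <- iota 0 (dyt n dy) | inJ a0 b0 (2 * bidx (sy n dy) r)].
Definition colsJ (a0 b0 : nat) : seq nat :=
  [seq c <- iota 0 (dxt n dx) | inJ a0 b0 (2 * (n - bidx (sxr n dx) c)).-1].

Definition MJ (V : rep K n dy dx) (a0 b0 : nat)
  : 'M[K]_(size (rowsJ a0 b0), size (colsJ a0 b0)) :=
  \matrix_(a, b) mxe (MQ V) (nth 0%N (rowsJ a0 b0) a) (nth 0%N (colsJ a0 b0) b).

Definition rJ (V : rep K n dy dx) (a0 b0 : nat) : nat := \rank (MJ V a0 b0).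

Definition satisfies (V : rep K n dy dx) (r : nat -> nat -> nat) : Prop :=
  forall a0 b0 : nat, (a0 <= b0 <= 2 * n)%N -> rJ V a0 b0 = r a0 b0.

Definition quiver_rank_array (r : nat -> nat -> nat) : Prop :=
  exists V : rep K n dy dx, satisfies V r.

Definition Ymat := 'M[K]_(dyt n dy + dxt n dx, dxt n dx + dyt n dy).

Definition in_Ycirc (Z : Ymat) : Prop :=
  exists A : 'M[K]_(dyt n dy, dxt n dx), Z = block_mx A 1%:M 1%:M 0.

Definition zeta (V : rep K n dy dx) : Ymat := block_mx (MQ V) 1%:M 1%:M 0.

Definition zrows : seq nat := sy n dy ++ sxr n dx.
Definition zcols : seq nat := sxr n dx ++ sy n dy.

(* rank of Z_(i x j): block rows 1..i and block columns 1..j *)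
Definition rankZ (Z : Ymat) (i j : nat) : nat :=
  \rank (\matrix_(a < sumn (take i zrows), b < sumn (take j zcols)) mxe Z a b).

(* b(r)_(i,j) = rank zeta(V)_(i x j) for (a chosen) V in O_r *)
Definition bR (r : nat -> nat -> nat) (i j : nat) : nat :=
  rankZ (zeta (epsilon (inhabits (rep0 K n dy dx)) (fun V => satisfies V r))) i j.

End QuiverMatrices.

(* Write Z = [[A, 1], [1, 0]].  In a corner Z_(i x j) the two identity blocks
   supply pivots that clear whole block rows of A (those facing the y-columns)
   and whole block columns of A (those facing the x-rows).  Hence
   rank Z_(i x j) is a number depending only on (i, j) and d, plus the rank of
   the rectangle of A made of the block rows y_ylo, ..., y_(yhi-1) and of the
   block columns numbered xlo, ..., xhi-1.
   M_Q(V) is supported on the arrow blocks (y_(k-1), x_k) and (y_k, x_k), and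
   the arrow blocks met by such a rectangle are exactly those of some interval
   J, and conversely; so the corner ranks of zeta(V) and the interval ranks of V
   determine each other.  For an arbitrary A, every block off the arrows lies in
   a rectangle meeting no arrow block, whose rank is 0 for M_Q(V); equality of
   the corner ranks therefore forces A to vanish off the arrow blocks, that is,
   A = M_Q(V) for the V read off from the blocks of A. *)

From Pilot Require Import Defs.
From HB Require Import structures.
From mathcomp Require Import all_boot all_order all_algebra zify.
From Stdlib Require Import ClassicalEpsilon.
Set Implicit Arguments. Unset Strict Implicit. Unset Printing Implicit Defensive.
Import GRing.Theory.

Section RankOn.
Variable K : fieldType.
Local Open Scope ring_scope.
Implicit Types (f g : nat -> nat -> K) (rs cs zs : seq nat).

Definition rank_on f rs cs : nat :=
  \rank (\matrix_(a < size rs, b < size cs) f (nth 0%N rs a) (nth 0%N cs b)).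

Lemma rank_onE f rs cs m p (em : size rs = m) (ep : size cs = p) :
  \rank (\matrix_(a < m, b < p) f (nth 0%N rs a) (nth 0%N cs b)) = rank_on f rs cs.
Proof. by case: m / em; case: p / ep. Qed.

Lemma rank_on_tr f rs cs : rank_on f rs cs = rank_on (fun a b => f b a) cs rs.
Proof. by rewrite /rank_on -mxrank_tr; congr (\rank _); apply/matrixP => i j; rewrite !mxE. Qed.

Lemma eq_in_rank_on f g rs cs :
  {in rs & cs, f =2 g} -> rank_on f rs cs = rank_on g rs cs.
Proof.
by move=> fg; congr (\rank _); apply/matrixP => i j; rewrite !mxE fg ?mem_nth.
Qed.

Lemma rank_on_nil f cs : rank_on f [::] cs = 0%N.
Proof. by apply/eqP; rewrite -leqn0 rank_leq_row. Qed.

Lemma mxrank_unitMl m p (U : 'M[K]_m) (A : 'M[K]_(m, p)) :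
  U \in unitmx -> \rank (U *m A) = \rank A.
Proof. by move=> hU; rewrite eqmxMfull // row_full_unit. Qed.

Lemma perm_rank_on f rs rs' cs : perm_eq rs rs' -> rank_on f rs cs = rank_on f rs' cs.
Proof.
move=> hp; have /perm.tuple_permP [s def_rs] : perm_eq rs (in_tuple rs') by [].
rewrite -(rank_onE f (perm_size hp) (erefl (size cs))) /rank_on.
suff -> : \matrix_(a < size rs', b < size cs) f (nth 0%N rs a) (nth 0%N cs b)
   = row_perm s (\matrix_(a < size rs', b < size cs) f (nth 0%N rs' a) (nth 0%N cs b)).
  by rewrite row_permE mxrank_unitMl // unitmx_perm.
apply/matrixP => i j; rewrite !mxE def_rs.
by rewrite -(tnth_nth 0%N (mktuple _)) tnth_mktuple (tnth_nth 0%N).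
Qed.

Lemma rank_on_cat_zero_rows f zs rs cs : {in zs & cs, forall a b, f a b = 0} ->
  rank_on f (zs ++ rs) cs = rank_on f rs cs.
Proof.
elim: zs => [//|z zs IHzs] f0 /=; rewrite {1}/rank_on.
have -> : \matrix_(a < size (z :: zs ++ rs), b < size cs)
            f (nth 0%N (z :: zs ++ rs) a) (nth 0%N cs b)
  = col_mx (0 : 'M_(1, size cs)) (\matrix_(a < size (zs ++ rs), b < size cs)
                f (nth 0%N (zs ++ rs) a) (nth 0%N cs b)).
  apply/matrixP => i j; rewrite !mxE.
  case: splitP => k ->; rewrite !mxE //.
  by rewrite (ord1 k) f0 ?mem_head ?mem_nth.
rewrite (rank_col_0mx 1); apply: IHzs => a b za cb.
by rewrite f0 // inE za orbT.
Qed.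

Lemma rank_on_pivot f a b rs cs : f a b = 1 -> {in cs, forall c, f a c = 0} ->
  rank_on f (a :: rs) (b :: cs) = (rank_on f rs cs).+1.
Proof.
move=> fab1 fa0; rewrite /rank_on.
set M := \matrix_(i < size rs, j < size cs) f (nth 0%N rs i) (nth 0%N cs j).
set u := \matrix_(i < size rs, j < 1) f (nth 0%N rs i) b.
have -> : \matrix_(i < size (a :: rs), j < size (b :: cs))
     f (nth 0%N (a :: rs) i) (nth 0%N (b :: cs) j) = block_mx 1%:M 0 u M.
  apply/matrixP => i j; rewrite !mxE.
  case: splitP => k ->; rewrite [RHS]mxE; case: splitP => l ->; rewrite !mxE.
  - by rewrite (ord1 k) (ord1 l).
  - by rewrite (ord1 k) /= add0n fa0 ?mem_nth.
  - by rewrite (ord1 l).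
  - by [].
have unitL : block_mx 1%:M 0 (- u) 1%:M \in unitmx.
  by rewrite unitmxE det_lblock !det1 mulr1 unitr1.
rewrite -(mxrank_unitMl (block_mx 1%:M 0 u M) unitL) mulmx_block.
rewrite !mul1mx !mul0mx mulmx1 mulmx0 !addr0 add0r addNr.
by rewrite rank_diag_block_mx mxrank1.
Qed.

Lemma rank_on_pivots f a0 b0 u rs cs :
  (forall t t', (t < u)%N -> (t' < u)%N -> f (a0 + t)%N (b0 + t')%N = (t == t')%:R) ->
  (forall t c, (t < u)%N -> c \in cs -> f (a0 + t)%N c = 0) ->
  rank_on f (iota a0 u ++ rs) (iota b0 u ++ cs) = (u + rank_on f rs cs)%N.
Proof.
elim: u a0 b0 => [//|u IHu] a0 b0 fI f0 /=.
rewrite rank_on_pivot.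
- rewrite IHu // => [t t' ht ht'|t c ht]; rewrite !addSnnS.
    by rewrite fI.
  exact: f0.
- by rewrite -[a0]addn0 -[b0]addn0 fI.
- move=> c; rewrite mem_cat mem_iota -[a0]addn0 => /orP[/andP[hc1 hc2]|hc].
    have /andP[c_pos c_lt] : (0 < c - b0 < u.+1)%N by lia.
    have -> : c = (b0 + (c - b0))%N by lia.
    by rewrite fI // eq_sym eqn0Ngt c_pos.
  by rewrite f0.
Qed.

Lemma rank_on_filter_rows f rs cs (P Q : pred nat) :
  (forall a c, a \in rs -> P a -> ~~ Q a -> c \in cs -> f a c = 0) ->
  rank_on f (filter P rs) cs = rank_on f (filter (predI P Q) rs) cs.
Proof.
move=> f0.
have hp : perm_eq (filter P rs)
    (filter (predC Q) (filter P rs) ++ filter Q (filter P rs)).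
  by rewrite perm_sym perm_catC perm_filterC.
rewrite (perm_rank_on _ _ hp) rank_on_cat_zero_rows.
  by rewrite -filter_predI; congr rank_on; apply: eq_filter => x /=; rewrite andbC.
move=> a c; rewrite !mem_filter => /andP[nQa /andP[Pa ra]] cc.
exact: f0.
Qed.

Lemma rank_on_filter_cols f rs cs (P Q : pred nat) :
  (forall a c, a \in rs -> c \in cs -> P c -> ~~ Q c -> f a c = 0) ->
  rank_on f rs (filter P cs) = rank_on f rs (filter (predI P Q) cs).
Proof.
move=> f0; rewrite rank_on_tr [RHS]rank_on_tr.
by apply: rank_on_filter_rows => c a *; apply: f0.
Qed.

Lemma eq_rank_on_filter f rs cs (P1 P2 C1 C2 : pred nat) :
  (forall a c, a \in rs -> c \in cs -> f a c != 0 -> P1 a && C1 c = P2 a && C2 c) ->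
  rank_on f (filter P1 rs) (filter C1 cs) = rank_on f (filter P2 rs) (filter C2 cs).
Proof.
suff meet : forall P1 P2 C1 C2 : pred nat,
    (forall a c, a \in rs -> c \in cs -> f a c != 0 ->
       P1 a && C1 c = P2 a && C2 c) ->
    rank_on f (filter P1 rs) (filter C1 cs) =
    rank_on f (filter (predI P1 P2) rs) (filter (predI C1 C2) cs).
  move=> supp; rewrite (meet P1 P2 C1 C2 supp) (meet P2 P1 C2 C1).
    by congr rank_on; apply: eq_filter => x /=; rewrite andbC.
  by move=> a c ra cc fac; rewrite supp.
move=> {}P1 {}P2 {}C1 {}C2 supp.
rewrite (@rank_on_filter_rows _ _ _ P1 P2) ?(@rank_on_filter_cols _ _ _ C1 C2) //.
  move=> a c; rewrite mem_filter => /andP[/andP[P1a P2a] ra] cc C1c nC2c.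
  apply/eqP; apply: contraTT nC2c => /(supp _ _ ra cc).
  by rewrite P1a C1c => /esym/andP[_ ->].
move=> a c ra P1a nP2a; rewrite mem_filter => /andP[C1c cc].
apply/eqP; apply: contraTT nP2a => /(supp _ _ ra cc).
by rewrite P1a C1c => /esym/andP[->].
Qed.

Lemma rank_on_eq0 f rs cs :
  rank_on f rs cs = 0%N -> {in rs & cs, forall a b, f a b = 0}.
Proof.
move=> /eqP; rewrite mxrank_eq0 => /eqP f0 a b ra cb.
have ia : (index a rs < size rs)%N by rewrite index_mem.
have ib : (index b cs < size cs)%N by rewrite index_mem.
have := congr1 (fun M : 'M[K]_(size rs, size cs) => M (Ordinal ia) (Ordinal ib)) f0.
by rewrite !mxE /= !nth_index.
Qed.

End RankOn.

Section Entries.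
Variable K : fieldType.
Local Open Scope ring_scope.

Lemma mxeE m p (A : 'M[K]_(m, p)) a b (ha : (a < m)%N) (hb : (b < p)%N) :
  mxe A a b = A (Ordinal ha) (Ordinal hb).
Proof.
rewrite /mxe (insubT (fun x => x < m)%N ha) (insubT (fun x => x < p)%N hb) /=.
by congr (A _ _); apply: val_inj.
Qed.

Lemma mxe_ord m p (A : 'M[K]_(m, p)) (i : 'I_m) (j : 'I_p) : mxe A i j = A i j.
Proof. by rewrite (mxeE _ (ltn_ord i) (ltn_ord j)); congr (A _ _); apply: val_inj. Qed.

Lemma mxe_out m p (A : 'M[K]_(m, p)) a b : ~~ ((a < m) && (b < p))%N -> mxe A a b = 0.
Proof.
rewrite /mxe => abN; case: insubP => [i ha _|//]; case: insubP => [j hb _|//].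
by rewrite ha hb in abN.
Qed.

Lemma mxe0 m p a b : mxe (0 : 'M[K]_(m, p)) a b = 0.
Proof.
case: (boolP ((a < m) && (b < p))%N) => [/andP[ha hb]|abN]; last exact: mxe_out.
by rewrite (mxeE _ ha hb) mxE.
Qed.

Lemma mxe1 k a b : (a < k)%N -> (b < k)%N -> mxe (1%:M : 'M[K]_k) a b = (a == b)%:R.
Proof. by move=> ha hb; rewrite (mxeE _ ha hb) mxE. Qed.

Lemma natr_eqF (x y : nat) : x != y -> (x == y)%:R = 0 :> K.
Proof. by move/negbTE->. Qed.

Lemma mxe_block m1 m2 n1 n2 (A : 'M[K]_(m1, n1)) (B : 'M[K]_(m1, n2))
    (C : 'M[K]_(m2, n1)) (D : 'M[K]_(m2, n2)) a b :
  (a < m1 + m2)%N -> (b < n1 + n2)%N ->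
  mxe (block_mx A B C D) a b =
  if (a < m1)%N then (if (b < n1)%N then mxe A a b else mxe B a (b - n1))
  else (if (b < n1)%N then mxe C (a - m1) b else mxe D (a - m1) (b - n1)).
Proof.
move=> ha hb; rewrite (mxeE _ ha hb).
have [a1|a1] := ltnP a m1; have [b1|b1] := ltnP b n1.
- rewrite (_ : Ordinal ha = lshift m2 (Ordinal a1)); last exact: val_inj.
  rewrite (_ : Ordinal hb = lshift n2 (Ordinal b1)); last exact: val_inj.
  by rewrite block_mxEul (mxeE _ a1 b1).
- have b2 : (b - n1 < n2)%N by lia.
  rewrite (_ : Ordinal ha = lshift m2 (Ordinal a1)); last exact: val_inj.
  rewrite (_ : Ordinal hb = rshift n1 (Ordinal b2)); last by apply: val_inj => /=; lia.
  by rewrite block_mxEur (mxeE _ a1 b2).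
- have a2 : (a - m1 < m2)%N by lia.
  rewrite (_ : Ordinal ha = rshift m1 (Ordinal a2)); last by apply: val_inj => /=; lia.
  rewrite (_ : Ordinal hb = lshift n2 (Ordinal b1)); last exact: val_inj.
  by rewrite block_mxEdl (mxeE _ a2 b1).
- have a2 : (a - m1 < m2)%N by lia.
  have b2 : (b - n1 < n2)%N by lia.
  rewrite (_ : Ordinal ha = rshift m1 (Ordinal a2)); last by apply: val_inj => /=; lia.
  rewrite (_ : Ordinal hb = rshift n1 (Ordinal b2)); last by apply: val_inj => /=; lia.
  by rewrite block_mxEdr (mxeE _ a2 b2).
Qed.

End Entries.

Section BlockIndex.
Implicit Types (s : seq nat) (k r : nat).

Definition psum s k : nat := sumn (take k s).

Lemma psum0 s : psum s 0 = 0.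
Proof. by rewrite /psum take0. Qed.

Lemma psum_le_sumn s k : psum s k <= sumn s.
Proof. by rewrite /psum -{2}(cat_take_drop k s) sumn_cat leq_addr. Qed.

Lemma psum_oversize s k : size s <= k -> psum s k = sumn s.
Proof. by move=> h; rewrite /psum take_oversize. Qed.

Lemma leq_psum s k1 k2 : k1 <= k2 -> psum s k1 <= psum s k2.
Proof. by move=> h; rewrite /psum -(subnKC h) takeD sumn_cat leq_addr. Qed.

Lemma psum_min s k1 k2 : minn (psum s k1) (psum s k2) = psum s (minn k1 k2).
Proof.
have [h|h] := leqP k1 k2; first by rewrite (minn_idPl (leq_psum s h)).
by rewrite (minn_idPr (leq_psum s (ltnW h))).
Qed.

Lemma psum_cat s1 s2 k :
  psum (s1 ++ s2) k = psum s1 (minn k (size s1)) + psum s2 (k - size s1).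
Proof.
rewrite /psum take_cat; have [h|h] := ltnP k (size s1).
  by rewrite (_ : k - size s1 = 0) ?take0 ?addn0 //; lia.
by rewrite take_size sumn_cat.
Qed.

Lemma psum_cat_subl s1 s2 k : psum (s1 ++ s2) k - sumn s1 = psum s2 (k - size s1).
Proof.
rewrite psum_cat; have [h|h] := leqP k (size s1).
  by rewrite (_ : k - size s1 = 0) ?psum0 ?addn0; have := psum_le_sumn s1 k; lia.
by rewrite psum_oversize; lia.
Qed.

Lemma psum_cat_minl s1 s2 k :
  minn (psum (s1 ++ s2) k) (sumn s1) = psum s1 (minn k (size s1)).
Proof.
rewrite psum_cat; have [h|h] := leqP k (size s1).
  by rewrite (_ : k - size s1 = 0) ?psum0 ?addn0; have := psum_le_sumn s1 k; lia.
by rewrite psum_oversize; lia.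
Qed.

Lemma psumS s k : k < size s -> psum s k.+1 = psum s k + nth 0 s k.
Proof. by move=> h; rewrite /psum (take_nth 0 h) -cats1 sumn_cat /= addn0. Qed.

Lemma bidx_cons x s r : bidx (x :: s) r = if x <= r then (bidx s (r - x)).+1 else 0.
Proof.
rewrite /bidx /= -[iota 1 _]/(iota (1 + 0) _) iotaDl count_map take0 /= addn0.
case: leqP => h.
  by rewrite add1n; congr _.+1; apply: eq_count => i /=; rewrite add1n leq_subRL.
rewrite add0n; apply/eqP; rewrite -leqn0 leqNgt -has_count.
by apply/hasPn => i _ /=; lia.
Qed.

Lemma leq_psum_bidx s r k : r < sumn s -> (psum s k <= r) = (k <= bidx s r).
Proof.
elim: s r k => [//|x s IHs] r k /= hr; rewrite bidx_cons.
case: k => [|k]; first by rewrite psum0.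
rewrite /psum /= -/(psum s k); have [h|h] := leqP x r; last by lia.
by rewrite ltnS -IHs; lia.
Qed.

Lemma bidx_lt s r : r < sumn s -> bidx s r < size s.
Proof. by move=> hr; rewrite ltnNge -leq_psum_bidx // psum_oversize //; lia. Qed.

Lemma bidx_bounds s r : r < sumn s ->
  psum s (bidx s r) <= r < psum s (bidx s r) + nth 0 s (bidx s r).
Proof.
by move=> hr; rewrite leq_psum_bidx // -psumS ?bidx_lt // ltnNge leq_psum_bidx //; lia.
Qed.

Lemma boff_lt s r : r < sumn s -> boff s r < nth 0 s (bidx s r).
Proof. by move=> /bidx_bounds; rewrite /boff /psum; lia. Qed.

Lemma psum_bidx_boff s r : r < sumn s -> psum s (bidx s r) + boff s r = r.
Proof. by move=> /bidx_bounds; rewrite /boff /psum; lia. Qed.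

Lemma filter_iota_range lo hi N : lo <= hi <= N ->
  [seq a <- iota 0 N | lo <= a < hi] = iota lo (hi - lo).
Proof.
move=> /andP[h1 h2]; rewrite -(subnKC h2) iotaD -(subnKC h1) iotaD !filter_cat add0n.
rewrite (@eq_in_filter _ _ pred0); last by move=> a; rewrite mem_iota /=; lia.
rewrite (@eq_in_filter _ _ predT (iota lo _)); last by move=> a; rewrite mem_iota /=; lia.
rewrite (@eq_in_filter _ _ pred0 (iota (lo + _) _)); last by move=> a; rewrite mem_iota /=; lia.
by rewrite !filter_pred0 filter_predT cats0 addKn.
Qed.

Lemma iota_psum s k1 k2 : k1 <= k2 ->
  iota (psum s k1) (psum s k2 - psum s k1) =
  [seq a <- iota 0 (sumn s) | k1 <= bidx s a < k2].
Proof.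
move=> h; rewrite -(@filter_iota_range _ _ (sumn s)); last first.
  by rewrite leq_psum // psum_le_sumn.
apply: eq_in_filter => a; rewrite mem_iota add0n => /andP[_ ha].
by rewrite leq_psum_bidx // [a < _]ltnNge leq_psum_bidx // -ltnNge.
Qed.

Lemma iota_cut a b c : b <= c -> iota a c = iota a b ++ iota (a + b) (c - b).
Proof. by move=> h; rewrite -iotaD subnKC. Qed.

Lemma iota0_cut N k : iota 0 N = iota 0 (minn N k) ++ iota k (N - k).
Proof.
have [Nk|kN] := leqP N k; first by rewrite (eqP Nk) cats0.
by rewrite -iotaD subnKC // ltnW.
Qed.

End BlockIndex.

Section CornerRank.
Variables (K : fieldType) (m p : nat) (A : 'M[K]_(m, p)).
Local Open Scope ring_scope.
Local Notation F := (mxe (block_mx A 1%:M 1%:M 0)).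

Lemma cornerE_ul a b : (a < m)%N -> (b < p)%N -> F a b = mxe A a b.
Proof. by move=> ha hb; rewrite mxe_block ?ha ?hb //; lia. Qed.

Lemma cornerE_ur a b : (a < m)%N -> (p <= b < p + m)%N -> F a b = (a == b - p)%N%:R.
Proof.
by move=> ha /andP[hb1 hb2]; rewrite mxe_block ?ha ?ltnNge ?hb1 ?mxe1 //; lia.
Qed.

Lemma cornerE_dl a b : (m <= a < m + p)%N -> (b < p)%N -> F a b = (a - m == b)%N%:R.
Proof.
by move=> /andP[ha1 ha2] hb; rewrite mxe_block ?hb ?ltnNge ?ha1 ?mxe1 //; lia.
Qed.

Lemma cornerE_dr a b : (m <= a)%N -> (p <= b)%N -> F a b = 0.
Proof.
move=> ha hb; have [/andP[ha' hb']|abN] := boolP ((a < m + p) && (b < p + m))%N.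
  by rewrite mxe_block // ltnNge ha ltnNge hb mxe0.
exact: mxe_out.
Qed.

Lemma rank_corner_id_rows P Q : (P <= m + p)%N ->
  let Q1 := minn Q p in let u := minn (P - m) Q1 in
  rank_on F (iota 0 P) (iota 0 Q) =
  (u + rank_on F (iota 0 (minn P m)) (iota u (Q1 - u) ++ iota p (Q - p)))%N.
Proof.
move=> hP Q1 u.
rewrite (iota0_cut P m) (iota0_cut Q p) (@iota_cut m u (P - m)) ?geq_minl //.
rewrite (@iota_cut 0 u Q1) ?geq_minr // add0n -catA.
have rowsP : perm_eq (iota 0 (minn P m) ++ iota m u ++ iota (m + u) (P - m - u))
                     (iota m u ++ iota (m + u) (P - m - u) ++ iota 0 (minn P m)).
  by rewrite perm_catC catA.
rewrite (perm_rank_on _ _ rowsP) rank_on_pivots.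
- congr addn; rewrite rank_on_cat_zero_rows // => a c.
  rewrite mem_iota mem_cat !mem_iota => ha /orP[] hc.
    by rewrite cornerE_dl ?natr_eqF //; lia.
  by rewrite cornerE_dr //; lia.
- by move=> t t' ht ht'; rewrite cornerE_dl ?addKn ?add0n //; lia.
- move=> t c ht; rewrite mem_cat !mem_iota => /orP[] hc.
    by rewrite cornerE_dl ?addKn ?natr_eqF //; lia.
  by rewrite cornerE_dr //; lia.
Qed.

Lemma rank_corner_id_cols P Q u : (u <= minn Q p)%N -> (Q <= p + m)%N ->
  let P1 := minn P m in let v := minn (Q - p) P1 in
  rank_on F (iota 0 P1) (iota u (minn Q p - u) ++ iota p (Q - p)) =
  (v + rank_on (mxe A) (iota v (P1 - v)) (iota u (minn Q p - u)))%N.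
Proof.
move=> hu hQ P1 v; rewrite rank_on_tr.
rewrite (@iota_cut p v (Q - p)) ?geq_minl // (@iota_cut 0 v P1) ?geq_minr // add0n.
have rowsP : perm_eq (iota u (minn Q p - u) ++ iota p v ++ iota (p + v) (Q - p - v))
                     (iota p v ++ iota (p + v) (Q - p - v) ++ iota u (minn Q p - u)).
  by rewrite perm_catC catA.
rewrite (perm_rank_on _ _ rowsP) rank_on_pivots.
- congr addn; rewrite rank_on_cat_zero_rows => [|b c].
    rewrite rank_on_tr; apply: eq_in_rank_on => a c; rewrite !mem_iota => ha hc.
    by rewrite cornerE_ul //; lia.
  rewrite !mem_iota => hb hc.
  by rewrite cornerE_ur ?natr_eqF //; lia.
- by move=> t t' ht ht'; rewrite cornerE_ur ?addKn ?add0n 1?eq_sym //; lia.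
- move=> t c ht; rewrite mem_iota => hc.
  by rewrite cornerE_ur ?addKn ?natr_eqF //; lia.
Qed.

(* u pivots come from the lower identity block and v from the upper one. *)
Lemma rank_corner_id P Q : (P <= m + p)%N -> (Q <= p + m)%N ->
  let P1 := minn P m in let Q1 := minn Q p in
  let u := minn (P - m) Q1 in let v := minn (Q - p) P1 in
  rank_on F (iota 0 P) (iota 0 Q) =
  (u + v + rank_on (mxe A) (iota v (P1 - v)) (iota u (Q1 - u)))%N.
Proof.
move=> hP hQ P1 Q1 u v.
by rewrite rank_corner_id_rows // rank_corner_id_cols ?addnA ?geq_minr.
Qed.

End CornerRank.

Section Corners.
Variable n : nat.

(* Block row p of M_Q is y_p and block column q is x_(n-q): the arrow blocks
   are those of alpha_(n-q) and beta_(n-q). *)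
Definition arrow_block p q := (p == n - q.+1) || (p == n - q).

(* The rectangle of A left in Z_(i x j) once the pivots of the identity blocks
   are cleared. *)
Definition yhi i := minn i n.+1.
Definition ylo i j := minn (j - n) (yhi i).
Definition xhi j := minn j n.
Definition xlo i j := minn (i - n.+1) (xhi j).

Definition corner_sel i j p q := (ylo i j <= p < yhi i) && (xlo i j <= q < xhi j).
(* Position 2k for y_k and 2k-1 for x_k, as in [inJ]. *)
Definition interval_sel a0 b0 p q := inJ a0 b0 (2 * p) && inJ a0 b0 (2 * (n - q)).-1.

Lemma rect_interval ra rb ca cb : ra <= rb <= n.+1 -> ca <= cb <= n ->
  exists a0 b0, a0 <= b0 <= 2 * n /\
    forall p q, p <= n -> q < n -> arrow_block p q ->
      (ra <= p < rb) && (ca <= q < cb) = interval_sel a0 b0 p q.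
Proof.
rewrite /interval_sel /inJ => hr hc.
have arrowP p q : arrow_block p q -> p = n - q.+1 \/ p = n - q.
  by case/orP => /eqP; auto.
pose a0 := if n - cb < ra then (2 * ra).-1 else 2 * (n - cb).
pose b0 := if n - ca < rb then 2 * (n - ca) else (2 * rb).-1.
have [le_ab|lt_ba] := leqP a0 b0.
  exists a0, b0; split.
    move: le_ab; rewrite /a0 /b0.
    by case: (ltnP (n - cb) ra) => ?; case: (ltnP (n - ca) rb) => ?; lia.
  move=> p q hp hq /arrowP ep; move: le_ab; rewrite /a0 /b0.
  by case: (ltnP (n - cb) ra) => ?; case: (ltnP (n - ca) rb) => ?; case: ep => ->; lia.
exists 0, 0; split=> // p q hp hq /arrowP ep; move: lt_ba; rewrite /a0 /b0.
by case: (ltnP (n - cb) ra) => ?; case: (ltnP (n - ca) rb) => ?; case: ep => ->; lia.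
Qed.

Lemma corner_interval i j : 1 <= i <= 2 * n + 1 -> 1 <= j <= 2 * n + 1 ->
  exists a0 b0, a0 <= b0 <= 2 * n /\
    forall p q, p <= n -> q < n -> arrow_block p q ->
      corner_sel i j p q = interval_sel a0 b0 p q.
Proof.
move=> hi hj; apply: rect_interval; rewrite /ylo /yhi /xlo /xhi; lia.
Qed.

Lemma corner_isolates p q : 1 <= n -> p <= n -> q < n -> ~~ arrow_block p q ->
  exists i j, [/\ 1 <= i <= 2 * n + 1, 1 <= j <= 2 * n + 1, corner_sel i j p q &
    forall p' q', p' <= n -> q' < n -> arrow_block p' q' -> ~~ corner_sel i j p' q'].
Proof.
rewrite /arrow_block /corner_sel /ylo /yhi /xlo /xhi => hn hp hq.
rewrite negb_or => /andP[/eqP hq1 /eqP hq0].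
have [lt_p|le_p] := ltnP p (n - q.+1).
  exists p.+1, q.+1; split; [lia | lia | lia |].
  by move=> p' q' hp' hq' /orP[]/eqP ->; lia.
exists (n.+1 + q), (n + p); split; [lia | lia | lia |].
by move=> p' q' hp' hq' /orP[]/eqP ->; lia.
Qed.

Lemma interval_corner a0 b0 : 1 <= n -> a0 <= b0 <= 2 * n ->
  exists i j, [/\ 1 <= i <= 2 * n + 1, 1 <= j <= 2 * n + 1 &
    forall p q, p <= n -> q < n -> arrow_block p q ->
      corner_sel i j p q = interval_sel a0 b0 p q].
Proof.
rewrite /corner_sel /interval_sel /ylo /yhi /xlo /xhi /inJ => hn hab.
have [a ea] : exists a, a0 = 2 * a \/ a0 = (2 * a).+1 by exists (a0 %/ 2); lia.
have [b eb] : exists b, b0 = 2 * b \/ b0 = (2 * b).+1 by exists (b0 %/ 2); lia.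
have arrowP p q : arrow_block p q -> p = n - q.+1 \/ p = n - q.
  by case/orP => /eqP; auto.
case: ea => ?; case: eb => ?; subst a0 b0.
- have [lt_an|le_na] := ltnP a n.
    exists (2 * n + 1 - b), (n - a); split; [lia | lia |].
    by move=> p q hp hq /arrowP[] ->; lia.
  exists 1, n.+1; split; [lia | lia |].
  by move=> p q hp hq /arrowP[] ->; lia.
- exists b.+1, (n - a); split; [lia | lia |].
  by move=> p q hp hq /arrowP[] ->; lia.
- exists (2 * n + 1 - b), (n + a.+1); split; [lia | lia |].
  by move=> p q hp hq /arrowP[] ->; lia.
- exists b.+1, (n + a.+1); split; [lia | lia |].
  by move=> p q hp hq /arrowP[] ->; lia.
Qed.

End Corners.

Section QuiverBlocks.
Variables (K : fieldType) (n : nat) (dy dx : nat -> nat).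
Local Open Scope ring_scope.

Local Notation sy := (sy n dy).
Local Notation sxr := (sxr n dx).
Local Notation dyt := (dyt n dy).
Local Notation dxt := (dxt n dx).

Lemma size_sy : size sy = n.+1.
Proof. by rewrite /Defs.sy size_map size_iota. Qed.

Lemma size_sxr : size sxr = n.
Proof. by rewrite /Defs.sxr size_map size_rev size_iota. Qed.

Lemma nth_sy k : (k <= n)%N -> nth 0%N sy k = dy k.
Proof. by move=> h; rewrite /Defs.sy (nth_map 0%N) ?size_iota // nth_iota. Qed.

Lemma nth_sxr q : (q < n)%N -> nth 0%N sxr q = dx (n - q).
Proof.
move=> h; rewrite /Defs.sxr (nth_map 0%N) ?size_rev ?size_iota //.
by rewrite nth_rev ?size_iota // nth_iota; [congr dx|]; lia.
Qed.

Lemma bidx_sy a : (a < dyt)%N -> (bidx sy a <= n)%N.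
Proof. by move/bidx_lt; rewrite size_sy. Qed.

Lemma bidx_sxr b : (b < dxt)%N -> (bidx sxr b < n)%N.
Proof. by move/bidx_lt; rewrite size_sxr. Qed.

Definition yrows ra rb := [seq a <- iota 0 dyt | ra <= bidx sy a < rb]%N.
Definition xcols ca cb := [seq b <- iota 0 dxt | ca <= bidx sxr b < cb]%N.

Definition corner_rank (A : 'M[K]_(dyt, dxt)) i j :=
  rank_on (mxe A) (yrows (ylo n i j) (yhi n i)) (xcols (xlo n i j) (xhi n j)).

Lemma rankZ_block (A : 'M[K]_(dyt, dxt)) i j :
  rankZ (block_mx A 1%:M 1%:M 0 : Ymat K n dy dx) i j =
  (psum sxr (xlo n i j) + psum sy (ylo n i j) + corner_rank A i j)%N.
Proof.
rewrite /rankZ.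
set P := sumn _; set Q := sumn _.
have -> : \rank (\matrix_(a < P, b < Q) mxe (block_mx A 1%:M 1%:M 0) a b)
   = rank_on (mxe (block_mx A 1%:M 1%:M 0)) (iota 0 P) (iota 0 Q).
  rewrite -(rank_onE _ (size_iota 0 P) (size_iota 0 Q)); congr (\rank _).
  by apply/matrixP => a b; rewrite !mxE !nth_iota.
have hP : (P <= dyt + dxt)%N by rewrite /dyt /dxt -sumn_cat psum_le_sumn.
have hQ : (Q <= dxt + dyt)%N by rewrite /dyt /dxt -sumn_cat psum_le_sumn.
rewrite rank_corner_id //.
rewrite /P /Q -/(psum _ i) -/(psum _ j) /zrows /zcols /dyt /dxt.
rewrite !psum_cat_subl !psum_cat_minl size_sy size_sxr !psum_min.
by rewrite /corner_rank /yrows /xcols -!iota_psum //; rewrite /ylo /yhi /xlo /xhi; lia.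
Qed.

Lemma MQ_arrow_block (V : rep K n dy dx) a b : (a < dyt)%N -> (b < dxt)%N ->
  mxe (MQ V) a b != 0 -> arrow_block n (bidx sy a) (bidx sxr b).
Proof.
move=> ha hb; rewrite (mxeE _ ha hb) mxE /= /arrow_block.
case: insubP => [i _ ei|]; last by rewrite eqxx.
have hq := bidx_sxr hb.
case: (bidx sy a =P i) => [-> _|_]; first by rewrite ei eqxx.
case: (bidx sy a =P i.+1) => [-> _|_]; last by rewrite eqxx.
by rewrite ei (_ : (n - (bidx sxr b).+1).+1 = n - bidx sxr b)%N ?eqxx ?orbT //; lia.
Qed.

Lemma eq_rank_on_MQ (V : rep K n dy dx) (Pr Jr Pc Jc : pred nat) :
  (forall p q, (p <= n)%N -> (q < n)%N -> arrow_block n p q ->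
     Pr p && Pc q = Jr p && Jc q) ->
  rank_on (mxe (MQ V)) [seq a <- iota 0 dyt | Pr (bidx sy a)]
                       [seq b <- iota 0 dxt | Pc (bidx sxr b)] =
  rank_on (mxe (MQ V)) [seq a <- iota 0 dyt | Jr (bidx sy a)]
                       [seq b <- iota 0 dxt | Jc (bidx sxr b)].
Proof.
move=> agree; apply: eq_rank_on_filter => a b; rewrite !mem_iota !add0n.
move=> /andP[_ ha] /andP[_ hb] /(MQ_arrow_block ha hb).
exact: agree (bidx_sy ha) (bidx_sxr hb).
Qed.

End QuiverBlocks.

Section CornerRanks.
Variables (K : fieldType) (n : nat) (dy dx : nat -> nat).
Local Open Scope ring_scope.

Local Notation sy := (sy n dy).
Local Notation sxr := (sxr n dx).
Local Notation dyt := (dyt n dy).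
Local Notation dxt := (dxt n dx).
Local Notation rep := (rep K n dy dx).

Lemma corner_rank_interval i j : (1 <= i <= 2 * n + 1)%N -> (1 <= j <= 2 * n + 1)%N ->
  exists a0 b0, (a0 <= b0 <= 2 * n)%N /\
    forall V : rep, corner_rank (MQ V) i j = rJ V a0 b0.
Proof.
move=> hi hj; have [a0 [b0 [hab agree]]] := corner_interval hi hj.
exists a0, b0; split=> // V.
exact: (@eq_rank_on_MQ K n dy dx V (fun p => ylo n i j <= p < yhi n i)%N
  (fun p => inJ a0 b0 (2 * p)%N) (fun q => xlo n i j <= q < xhi n j)%N
  (fun q => inJ a0 b0 (2 * (n - q)).-1%N) agree).
Qed.

Lemma interval_corner_rank a0 b0 : (1 <= n)%N -> (a0 <= b0 <= 2 * n)%N ->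
  exists i j, [/\ (1 <= i <= 2 * n + 1)%N, (1 <= j <= 2 * n + 1)%N &
    forall V : rep, rJ V a0 b0 = corner_rank (MQ V) i j].
Proof.
move=> hn hab; have [i [j [hi hj agree]]] := interval_corner hn hab.
exists i, j; split=> // V; symmetry.
exact: (@eq_rank_on_MQ K n dy dx V (fun p => ylo n i j <= p < yhi n i)%N
  (fun p => inJ a0 b0 (2 * p)%N) (fun q => xlo n i j <= q < xhi n j)%N
  (fun q => inJ a0 b0 (2 * (n - q)).-1%N) agree).
Qed.

Lemma corner_rank_off_arrows a b : (1 <= n)%N -> (a < dyt)%N -> (b < dxt)%N ->
  ~~ arrow_block n (bidx sy a) (bidx sxr b) ->
  exists i j, [/\ (1 <= i <= 2 * n + 1)%N, (1 <= j <= 2 * n + 1)%N,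
    a \in yrows n dy (ylo n i j) (yhi n i), b \in xcols n dx (xlo n i j) (xhi n j) &
    forall V : rep, corner_rank (MQ V) i j = 0%N].
Proof.
move=> hn ha hb off.
have [i [j [hi hj /andP[ai bj] isol]]] :=
  corner_isolates hn (bidx_sy ha) (bidx_sxr hb) off.
exists i, j; split=> //.
- by rewrite mem_filter ai mem_iota.
- by rewrite mem_filter bj mem_iota.
move=> V; rewrite /corner_rank (@eq_rank_on_MQ K n dy dx V
  (fun p => ylo n i j <= p < yhi n i)%N pred0 (fun q => xlo n i j <= q < xhi n j)%N pred0).
  by rewrite filter_pred0 rank_on_nil.
by move=> p q hp hq /(isol p q hp hq)/negbTE.
Qed.

Definition rep_of_mx (A : 'M[K]_(dyt, dxt)) : rep :=
  Rep (fun i => \matrix_(a < dy i, b < dx i.+1)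
                  mxe A (psum sy i + a) (psum sxr (n - i.+1) + b))
      (fun i => \matrix_(a < dy i.+1, b < dx i.+1)
                  mxe A (psum sy i.+1 + a) (psum sxr (n - i.+1) + b)).

Lemma MQ_rep_of_mx (A : 'M[K]_(dyt, dxt)) :
  (forall a b, (a < dyt)%N -> (b < dxt)%N ->
     ~~ arrow_block n (bidx sy a) (bidx sxr b) -> mxe A a b = 0) ->
  MQ (rep_of_mx A) = A.
Proof.
move=> offA; apply/matrixP => a b; rewrite mxE /=.
have ha := ltn_ord a; have hb := ltn_ord b.
have hq := bidx_sxr hb; have hoa := boff_lt ha; have hob := boff_lt hb.
rewrite nth_sxr // in hob.
set q := bidx sxr b in hq hob *; set p := bidx sy a in hoa *.
have hi : (n - q.+1 < n)%N by lia.
have eq_ob : (psum sxr (n - (n - q.+1).+1) + boff sxr b)%N = b.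
  by rewrite (_ : (n - (n - q.+1).+1)%N = q) ?psum_bidx_boff //; lia.
have ob_lt : (boff sxr b < dx (n - q.+1).+1)%N by rewrite (_ : (n - q.+1).+1 = n - q)%N //; lia.
rewrite (insubT (fun x => x < n)%N hi) /=.
case: (p =P n - q.+1)%N => [e|ne].
  have oa_lt : (boff sy a < dy (n - q.+1))%N by rewrite -e -(@nth_sy n dy) // e; lia.
  rewrite (mxeE _ oa_lt ob_lt) mxE -mxe_ord /= eq_ob; congr (mxe A _ _).
  by rewrite -e (psum_bidx_boff ha).
case: (p =P (n - q.+1).+1)%N => [e|ne2].
  have oa_lt : (boff sy a < dy (n - q.+1).+1)%N by rewrite -e -(@nth_sy n dy) // e; lia.
  rewrite (mxeE _ oa_lt ob_lt) mxE -mxe_ord /= eq_ob; congr (mxe A _ _).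
  by rewrite -e (psum_bidx_boff ha).
by rewrite -mxe_ord offA // /arrow_block; apply/norP; split; apply/eqP; lia.
Qed.

Lemma MQ_rep_of_corner_ranks (A : 'M[K]_(dyt, dxt)) (W : rep) : (1 <= n)%N ->
  (forall i j, (1 <= i <= 2 * n + 1)%N -> (1 <= j <= 2 * n + 1)%N ->
     corner_rank A i j = corner_rank (MQ W) i j) ->
  MQ (rep_of_mx A) = A.
Proof.
move=> hn eqA; apply: MQ_rep_of_mx => a b ha hb off.
have [i [j [hi hj ai bj zeroW]]] := corner_rank_off_arrows hn ha hb off.
by apply: (rank_on_eq0 _ ai bj); rewrite [LHS]eqA ?zeroW.
Qed.

End CornerRanks.

Theorem proposition4p4 (K : fieldType) (n : nat) (dy dx : nat -> nat)
    (r : nat -> nat -> nat) :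
  (1 <= n)%N ->
  @quiver_rank_array K n dy dx r ->
  forall Z : Ymat K n dy dx,
    @in_Ycirc K n dy dx Z ->
    ((forall i j : nat, (1 <= i <= 2 * n + 1)%N -> (1 <= j <= 2 * n + 1)%N ->
        @rankZ K n dy dx Z i j = @bR K n dy dx r i j)
     <-> exists V : rep K n dy dx, @satisfies K n dy dx V r /\ Z = @zeta K n dy dx V).
Proof.
move=> hn [V1 hV1] Z [A ->].
rewrite /bR; set V0 := epsilon _ _.
have hV0 : satisfies V0 r by apply: (epsilon_spec _ (fun V => satisfies V r)); exists V1.
rewrite /zeta; split=> [eqZ | [V [hV ->]] i j hi hj].
- have eqA i j : (1 <= i <= 2 * n + 1)%N -> (1 <= j <= 2 * n + 1)%N ->
      corner_rank A i j = corner_rank (MQ V0) i j.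
    by move=> hi hj; move: (eqZ i j hi hj); rewrite !rankZ_block; apply: addnI.
  have defA := MQ_rep_of_corner_ranks hn eqA.
  exists (rep_of_mx A); split; last by rewrite defA.
  move=> a0 b0 hab; have [i [j [hi hj rJE]]] := interval_corner_rank K dy dx hn hab.
  by rewrite -hV0 // !rJE defA eqA.
- rewrite !rankZ_block; congr addn.
  have [a0 [b0 [hab rJE]]] := corner_rank_interval K dy dx hi hj.
  by rewrite !rJE hV ?hV0.
Qed.
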